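(* Consider a fixed-size experiment measuring a binary observable $P$ (single-shot outcomes in $\{-1,+1\}$) with ideal expectation $\langle P\rangle_0=1$. Fix a Richardson rule of order $k\ge1$ with scale factors $1=\lambda_0<\cdots<\lambda_k$, coefficients $c_j$ with $\sum_jc_j=1$, $\sum_jc_j\lambda_j^m=0$ ($m=1,\ldots,k$), allocation fractions $\pi_j>0$, $\sum_j\pi_j=1$, independent samples across scales. Suppose that for each $j$ \[ \mu(\lambda_j\epsilon)=\langle P\rangle_{\lambda_j\epsilon}=(1-\gamma\lambda_j\epsilon)^{\ell_n}+O_n(\epsilon^2),\qquad\gamma>0, \] where $\ell_n$ is a fixed positive integer. Let $\kappa_n=\gamma\ell_n$. Then, with $D(\epsilon)=\mathrm{Bias}_{\mathrm{noisy}}(\epsilon)^2-\mathrm{Bias}_{\mathrm{ZNE}}(\epsilon)^2$ and $A_k(\epsilon)=\sum_jc_j^2v(\lambda_j\epsilon)/\pi_j-v(\epsilon)$, \[ D(\epsilon)=\kappa_n^2\epsilon^2+O_n(\epsilon^3),\qquad v_n(\epsilon)=2\kappa_n\epsilon+O_n(\epsilon^2),\qquad A_k(\epsilon)=K_{1,k,n}\epsilon+O_n(\epsilon^2), \] with \[ K_{1,k,n}=2\kappa_n\left[\sum_j\frac{c_j^2\lambda_j}{\pi_j}-1\right]; \] that is, the leading MSE balance $\Delta_{\mathrm{MSE}}(\epsilon,B)=D(\epsilon)-A_k(\epsilon)/B$ holds with $p=1$, $q=1$, $D_{1,n}=\kappa_n^2$, $\nu_n=2\kappa_n$. The lower local help-harm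 boundary satisfies \[ \epsilon^*_n(B)\sim\frac{2}{\kappa_n}\left[\sum_j\frac{c_j^2\lambda_j}{\pi_j}-1\right]B^{-1}\qquad(B\to\infty). \]
   Context: $\mu(\epsilon)$ is the noisy expectation of $P$, $v_n(\epsilon)=1-\mu(\epsilon)^2$ its single-shot variance. With total shot budget $B$, the unmitigated estimator is the mean of $B$ shots at noise $\epsilon$ and $\widehat\mu_{\mathrm{ZNE}}=\sum_jc_j\widehat\mu(\lambda_j\epsilon)$ with $\widehat\mu(\lambda_j\epsilon)$ the mean of $\pi_jB$ shots at noise $\lambda_j\epsilon$. $\mathrm{Bias}_{\mathrm{noisy}}=\mu(\epsilon)-\langle P\rangle_0$, $\mathrm{Bias}_{\mathrm{ZNE}}=\mathbb E[\widehat\mu_{\mathrm{ZNE}}]-\langle P\rangle_0$, and $\Delta_{\mathrm{MSE}}=\mathrm{MSE}_{\mathrm{noisy}}-\mathrm{MSE}_{\mathrm{ZNE}}$ with $\mathrm{MSE}=\mathbb E[(\widehat\mu-\langle P\rangle_0)^2]$. The lower local help-harm boundary $\epsilon^*_n(B)$ is the first positive small-noise zero of $\Delta_{\mathrm{MSE}}(\cdot,B)$ where it changes from negative to positive; $\sim$ means ratio tends to $1$. *)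

From HB Require Import structures.
From mathcomp Require Import all_boot all_order all_algebra.
From mathcomp Require Import reals.
Set Implicit Arguments. Unset Strict Implicit. Unset Printing Implicit Defensive.
Import Order.TTheory GRing.Theory Num.Theory.
Local Open Scope ring_scope.

Section ZNE.
Variable R : realType.

Definition bigO_at0 (f : R -> R) (n : nat) : Prop :=
  exists C : R, exists d : R, 0 < d /\
    forall e : R, 0 < e -> e < d -> `|f e| <= C * e ^+ n.

Definition richardson_rule (k : nat) (c lam : 'I_k.+1 -> R) : Prop :=
  [/\ lam ord0 = 1,
      (forall i j : 'I_k.+1, (i < j)%N -> lam i < lam j),
      \sum_(j < k.+1) c j = 1 &
      forall m : nat, (1 <= m <= k)%N -> \sum_(j < k.+1) c j * lam j ^+ m = 0].

Definition allocation (k : nat) (pi : 'I_k.+1 -> R) : Prop :=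
  (forall j, 0 < pi j) /\ \sum_(j < k.+1) pi j = 1.

(* ideal expectation <P>_0 = 1 *)
Definition bias_noisy (mu : R -> R) (e : R) : R := mu e - 1.
Definition bias_zne (k : nat) (c lam : 'I_k.+1 -> R) (mu : R -> R) (e : R) : R :=
  \sum_(j < k.+1) c j * mu (lam j * e) - 1.
(* single-shot variance *)
Definition vn (mu : R -> R) (e : R) : R := 1 - mu e ^+ 2.

(* MSE of the mean of B shots at noise e *)
Definition mse_noisy (mu : R -> R) (B e : R) : R :=
  bias_noisy mu e ^+ 2 + vn mu e / B.
(* MSE of sum_j c_j * (mean of pi_j B independent shots at noise lam_j e) *)
Definition mse_zne (k : nat) (c lam pi : 'I_k.+1 -> R) (mu : R -> R) (B e : R) : R :=
  bias_zne c lam mu e ^+ 2 + \sum_(j < k.+1) c j ^+ 2 * vn mu (lam j * e) / (pi j * B).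
Definition delta_mse k c lam pi mu B e : R :=
  mse_noisy mu B e - @mse_zne k c lam pi mu B e.

Definition Dbias k c lam mu e : R := bias_noisy mu e ^+ 2 - @bias_zne k c lam mu e ^+ 2.
Definition Ak (k : nat) (c lam pi : 'I_k.+1 -> R) (mu : R -> R) (e : R) : R :=
  \sum_(j < k.+1) c j ^+ 2 * vn mu (lam j * e) / pi j - vn mu e.

Definition lower_boundary (Delta : R -> R) (e : R) : Prop :=
  [/\ 0 < e, Delta e = 0,
      (forall x, 0 < x -> x < e -> Delta x < 0) &
      exists eta, 0 < eta /\ forall x, e < x -> x < e + eta -> 0 < Delta x].

End ZNE.

(* Write kappa = gamma l.  The power law linearizes to mu(lam e) = 1 - kappa lam e + O(e^2) at
   every scale.  The moment conditions sum_j c_j = 1 and sum_j c_j lam_j = 0 cancel the linear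
   term of the extrapolated mean, so Bias_ZNE = O(e^2) while Bias_noisy = -kappa e + O(e^2), and
   v(lam e) = 1 - mu(lam e)^2 = 2 kappa lam e + O(e^2); hence D ~ kappa^2 e^2 and
   A_k ~ 2 kappa (S - 1) e with S = sum_j c_j^2 lam_j / pi_j.  The factor S - 1 is positive: it
   equals sum_j c_j^2 (lam_j - 1) / pi_j + sum_j (c_j - pi_j)^2 / pi_j, and some c_j with j >= 1
   is nonzero, for otherwise the first moment condition would give c_0 = 0.
   For the boundary e0 = estar B: Delta_B(x) = D(x) - A_k(x) / B is positive at a fixed small x
   once B is large, so e0 < x.  Dividing the balance B D(e0) = A_k(e0) by e0 gives
   |kappa^2 (e0 B) - 2 kappa (S - 1)| <= O(e0) (1 + e0 B), which first bounds e0 B and then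
   forces e0 B -> 2 (S - 1) / kappa. *)

From HB Require Import structures.
From mathcomp Require Import all_boot all_order all_algebra.
From mathcomp Require Import reals ring lra.
Import Order.TTheory GRing.Theory Num.Theory.
Local Open Scope ring_scope.

Section BigOAtZero.
Context {R : realType}.
Implicit Types (f g : R -> R) (a : R) (n m : nat).

Lemma bigO_at0_eq {f g n} :
  (forall e, 0 < e -> f e = g e) -> bigO_at0 f n -> bigO_at0 g n.
Proof.
move=> fg [C [d [d_gt0 fO]]]; exists C, d; split => // e e_gt0 lted.
by rewrite -fg //; apply: fO.
Qed.

Lemma bigO_at0_ge0 {f n} : bigO_at0 f n ->
  exists C d, [/\ 0 <= C, 0 < d &
    forall e, 0 < e -> e < d -> `|f e| <= C * e ^+ n].
Proof.
move=> [C [d [d_gt0 fO]]]; exists `|C|, d; split => // e e_gt0 lted.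
apply: le_trans (fO e e_gt0 lted) _.
by apply: ler_wpM2r; [rewrite exprn_ge0 // ltW | exact: ler_norm].
Qed.

Lemma bigO_at0D {f g n} :
  bigO_at0 f n -> bigO_at0 g n -> bigO_at0 (fun e => f e + g e) n.
Proof.
move=> [C1 [d1 [d1_gt0 fO]]] [C2 [d2 [d2_gt0 gO]]].
exists (C1 + C2), (Order.min d1 d2); split; first by rewrite lt_min d1_gt0.
move=> e e_gt0; rewrite lt_min => /andP[ltd1 ltd2].
apply: le_trans (ler_normD _ _) _.
by rewrite mulrDl lerD ?fO ?gO.
Qed.

Lemma bigO_at0Z a {f n} : bigO_at0 f n -> bigO_at0 (fun e => a * f e) n.
Proof.
move=> [C [d [d_gt0 fO]]]; exists (`|a| * C), d; split => // e e_gt0 ltd.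
by rewrite normrM -mulrA ler_wpM2l ?fO.
Qed.

Lemma bigO_at0B {f g n} :
  bigO_at0 f n -> bigO_at0 g n -> bigO_at0 (fun e => f e - g e) n.
Proof.
move=> fO gO; apply: bigO_at0_eq (bigO_at0D fO (bigO_at0Z (-1) gO)) => e _.
by rewrite mulN1r.
Qed.

Lemma bigO_at0M {f g n m} :
  bigO_at0 f n -> bigO_at0 g m -> bigO_at0 (fun e => f e * g e) (n + m).
Proof.
move=> /bigO_at0_ge0[C1 [d1 [C1_ge0 d1_gt0 fO]]].
move=> /bigO_at0_ge0[C2 [d2 [C2_ge0 d2_gt0 gO]]].
exists (C1 * C2), (Order.min d1 d2); split; first by rewrite lt_min d1_gt0.
move=> e e_gt0; rewrite lt_min => /andP[ltd1 ltd2].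
rewrite normrM exprD mulrACA.
by apply: ler_pM => //; [apply: fO | apply: gO].
Qed.

Lemma bigO_at0W m {f n} : bigO_at0 f n -> (m <= n)%N -> bigO_at0 f m.
Proof.
move=> /bigO_at0_ge0[C [d [C_ge0 d_gt0 fO]]] lemn.
exists C, (Order.min d 1); split; first by rewrite lt_min d_gt0 ltr01.
move=> e e_gt0; rewrite lt_min => /andP[ltd lte1].
apply: le_trans (fO e e_gt0 ltd) _.
by rewrite ler_wpM2l // ler_wiXn2l ?ltW.
Qed.

Lemma bigO_at0_sum {I : finType} {F : I -> R -> R} {n} :
  (forall i, bigO_at0 (F i) n) -> bigO_at0 (fun e => \sum_i F i e) n.
Proof.
move=> FO; rewrite unlock; elim: (index_enum I) => [|i s IHs] /=.
  by exists 0, 1; split => // e _ _; rewrite normr0 mul0r.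
exact: bigO_at0D.
Qed.

Lemma bigO_at0_monom a n : bigO_at0 (fun e => a * e ^+ n) n.
Proof.
apply: bigO_at0Z; exists 1, 1; split => // e e_gt0 _.
by rewrite mul1r ger0_norm // exprn_ge0 // ltW.
Qed.

End BigOAtZero.

Section Linearization.
Context {R : realType}.

Lemma exprDn_linear_rem (l : nat) : exists K : R, forall x : R, `|x| <= 1 ->
  `|(1 + x) ^+ l - 1 - l%:R * x| <= K * x ^+ 2.
Proof.
elim: l => [|l [K IH]].
  by exists 0 => x _; rewrite expr0 mul0r subrr sub0r oppr0 normr0 mul0r.
exists (2 * `|K| + l%:R) => x x_le1.
have -> : (1 + x) ^+ l.+1 - 1 - l.+1%:R * x
    = (1 + x) * ((1 + x) ^+ l - 1 - l%:R * x) + l%:R * x ^+ 2.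
  by rewrite exprS -addn1 natrD; ring.
apply: le_trans (ler_normD _ _) _.
rewrite normrM [`|_%:R * _|]ger0_norm; last by rewrite mulr_ge0 ?sqr_ge0.
rewrite mulrDl lerD2r -mulrA.
apply: ler_pM => //; first by apply: le_trans (ler_normD _ _) _; rewrite normr1; lra.
by apply: le_trans (IH x x_le1) _; apply: ler_wpM2r; rewrite ?sqr_ge0 ?ler_norm.
Qed.

Lemma bigO_at0_exprDn_linear (a : R) (l : nat) :
  bigO_at0 (fun e => (1 + a * e) ^+ l - 1 - l%:R * (a * e)) 2.
Proof.
have [K remK] := exprDn_linear_rem l.
exists (K * a ^+ 2), (1 / (`|a| + 1)); split; first by rewrite divr_gt0 ?ltr_wpDl.
move=> e e_gt0; rewrite ltr_pdivlMr ?ltr_wpDl // => e_small.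
have ae_le1 : `|a * e| <= 1.
  by rewrite normrM (gtr0_norm e_gt0); have := normr_ge0 a; nra.
by apply: le_trans (remK _ ae_le1) _; rewrite exprMn mulrA.
Qed.

Lemma power_law_linear {mu : R -> R} {gamma a : R} {l : nat} :
  bigO_at0 (fun e => mu (a * e) - (1 - gamma * a * e) ^+ l) 2 ->
  bigO_at0 (fun e => mu (a * e) - 1 + gamma * l%:R * a * e) 2.
Proof.
move=> muO; have := bigO_at0D muO (bigO_at0_exprDn_linear (- (gamma * a)) l).
apply: bigO_at0_eq => e _.
by rewrite mulNr -mulrA; ring.
Qed.

Lemma vn_linear {mu : R -> R} {kappa a : R} :
  bigO_at0 (fun e => mu (a * e) - 1 + kappa * a * e) 2 ->
  bigO_at0 (fun e => vn mu (a * e) - 2 * kappa * a * e) 2.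
Proof.
set r := fun e => _ => rO.
have rrO : bigO_at0 (fun e => r e * r e) 2 := bigO_at0W 2 (bigO_at0M rO rO) isT.
have erO : bigO_at0 (fun e => (2 * kappa * a * e) * r e) 2 :=
  bigO_at0W 2 (bigO_at0M (bigO_at0_monom (2 * kappa * a) 1) rO) isT.
have := bigO_at0D (bigO_at0D (bigO_at0Z (-2) rO) erO)
                  (bigO_at0D (bigO_at0_monom (- (kappa * a) ^+ 2) 2) (bigO_at0Z (-1) rrO)).
by apply: bigO_at0_eq => e _; rewrite /vn /r; ring.
Qed.

End Linearization.

Section HelpHarmBoundary.
Context {R : realType}.

Lemma balance_root_bound {a b c1 c3 e B De Ae : R} : 0 < e -> 0 < B ->
  `|De - a * e ^+ 2| <= c1 * e ^+ 3 -> `|Ae - b * e| <= c3 * e ^+ 2 ->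
  B * De = Ae -> `|a * (e * B) - b| <= e * (c3 + c1 * (e * B)).
Proof.
move=> e_gt0 B_gt0 DeO AeO balance.
have split_err : e * (a * (e * B) - b) = (Ae - b * e) - B * (De - a * e ^+ 2).
  by rewrite -balance; ring.
have : `|e * (a * (e * B) - b)| <= e * (e * (c3 + c1 * (e * B))).
  rewrite split_err; apply: le_trans (ler_normB _ _) _.
  have -> : e * (e * (c3 + c1 * (e * B))) = c3 * e ^+ 2 + B * (c1 * e ^+ 3) by ring.
  by rewrite normrM gtr0_norm // lerD // ler_pM2l.
by rewrite normrM gtr0_norm // ler_pM2l.
Qed.

Lemma scaled_root_bound {a b c1 c3 e B De Ae : R} :
  0 < a -> 0 <= c1 -> 0 <= c3 -> 0 < e -> 0 < B ->
  e * c1 <= a / 2 -> e * c3 <= b / 2 ->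
  `|De - a * e ^+ 2| <= c1 * e ^+ 3 -> `|Ae - b * e| <= c3 * e ^+ 2 ->
  B * De = Ae -> `|a * (e * B) - b| <= 3 * b / a * (c3 + c1 * (3 * b / a)) / B.
Proof.
move=> a_gt0 c1_ge0 c3_ge0 e_gt0 B_gt0 ec1_small ec3_small DeO AeO balance.
have := balance_root_bound e_gt0 B_gt0 DeO AeO balance.
set u := e * B => root_bound.
have u_ge0 : 0 <= u by rewrite mulr_ge0 ?ltW.
have u_le : u <= 3 * b / a.
  rewrite ler_pdivlMr //.
  have := ler_wpM2r u_ge0 ec1_small.
  move: root_bound; rewrite ler_norml => /andP[_]; nra.
have e_eq : e = u / B by rewrite /u mulfK ?gt_eqF.
apply: le_trans root_bound _; rewrite {1}e_eq mulrAC.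
apply: ler_wpM2r; first by rewrite invr_ge0 ltW.
apply: ler_pM => //; first by rewrite addr_ge0 // mulr_ge0.
by rewrite lerD2l ler_wpM2l.
Qed.

Lemma lower_boundary_lt {Delta : R -> R} {e x : R} :
  lower_boundary Delta e -> 0 < x -> 0 < Delta x -> e < x.
Proof.
case=> _ Delta_e Delta_lt0 _ x_gt0 Delta_x_gt0; rewrite ltNge le_eqVlt.
apply/negP => /orP[/eqP xe | ltxe]; first by move: Delta_x_gt0; rewrite xe Delta_e ltxx.
by have := Delta_lt0 x x_gt0 ltxe; rewrite ltNge ltW.
Qed.

Section ExpansionWindow.
Context {D A : R -> R} {a b : R}.
Hypotheses (a_gt0 : 0 < a) (b_gt0 : 0 < b).
Hypothesis D_expansion : bigO_at0 (fun e => D e - a * e ^+ 2) 3.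
Hypothesis A_expansion : bigO_at0 (fun e => A e - b * e) 2.

Lemma small_noise_window : exists c1 c3 x, [/\ 0 <= c1, 0 <= c3, 0 < x, 0 < D x &
  forall e, 0 < e -> e <= x ->
    [/\ `|D e - a * e ^+ 2| <= c1 * e ^+ 3, `|A e - b * e| <= c3 * e ^+ 2,
        e * c1 <= a / 2 & e * c3 <= b / 2]].
Proof.
have [c1 [d1 [c1_ge0 d1_gt0 DO]]] := bigO_at0_ge0 D_expansion.
have [c3 [d3 [c3_ge0 d3_gt0 AO]]] := bigO_at0_ge0 A_expansion.
pose x := Order.min (Order.min (d1 / 2) (d3 / 2))
                    (Order.min (a / (2 * (c1 + 1))) (b / (2 * (c3 + 1)))).
have x_gt0 : 0 < x by rewrite !lt_min !divr_gt0 ?mulr_gt0 ?ltr_wpDl.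
have := le_refl x; rewrite {2}/x !le_min.
move=> /andP[/andP[x_le_d1 x_le_d3] /andP[x_le_a x_le_b]].
have near0 e : 0 < e -> e <= x ->
    [/\ `|D e - a * e ^+ 2| <= c1 * e ^+ 3, `|A e - b * e| <= c3 * e ^+ 2,
        e * c1 <= a / 2 & e * c3 <= b / 2].
  move=> e_gt0 e_le_x; split.
  - by apply: DO => //; lra.
  - by apply: AO => //; lra.
  - move: x_le_a; rewrite ler_pdivlMr; last lra.
    have := ler_wpM2r c1_ge0 e_le_x; nra.
  - move: x_le_b; rewrite ler_pdivlMr; last lra.
    have := ler_wpM2r c3_ge0 e_le_x; nra.
exists c1, c3, x; split => //.
have [DxO _ xc1 _] := near0 x x_gt0 (le_refl x).
have x2_gt0 : 0 < x ^+ 2 by rewrite exprn_gt0.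
have ax2_gt0 : 0 < a * x ^+ 2 by rewrite mulr_gt0.
move: DxO; rewrite ler_norml => /andP[+ _].
have -> : c1 * x ^+ 3 = (x * c1) * x ^+ 2 by ring.
have := ler_wpM2r (ltW x2_gt0) xc1; lra.
Qed.

Lemma lower_boundary_asymptotics {Delta : R -> R -> R} {estar : R -> R} :
  (forall B e : R, 0 < B -> Delta B e = D e - A e / B) ->
  (exists B0 : R, forall B, B0 < B -> lower_boundary (Delta B) (estar B)) ->
  forall eta : R, 0 < eta -> exists M : R, forall B : R, M < B ->
    `|estar B / (b / a / B) - 1| < eta.
Proof.
move=> DeltaE [B0 boundary] eta eta_gt0.
have [c1 [c3 [x [c1_ge0 c3_ge0 x_gt0 Dx_gt0 near0]]]] := small_noise_window.
pose W := 3 * b / a * (c3 + c1 * (3 * b / a)).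
(* The middle bound makes Delta B positive at x, which traps the boundary below x. *)
exists (Num.max B0 (Num.max (`|A x| / D x) (W / (b * eta)))) => B.
rewrite !gt_max => /and3P[B0_lt_B AxB WB].
have B_gt0 : 0 < B by apply: le_lt_trans AxB; rewrite divr_ge0 // ltW.
have := boundary B B0_lt_B; set e := estar B => boundary_B.
have [e_gt0 Delta_e _ _] := boundary_B.
have e_lt_x : e < x.
  apply: (lower_boundary_lt boundary_B x_gt0).
  rewrite DeltaE // subr_gt0; apply: le_lt_trans (ler_wpM2r _ (ler_norm _)) _.
    by rewrite invr_ge0 ltW.
  by rewrite ltr_pdivrMr // mulrC -ltr_pdivrMr.
have balance : B * D e = A e.
  move: Delta_e; rewrite DeltaE // => /eqP; rewrite subr_eq0 => /eqP ->.
  by rewrite mulrC divfK ?gt_eqF.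
have [DeO AeO ec1 ec3] := near0 e e_gt0 (ltW e_lt_x).
have := scaled_root_bound a_gt0 c1_ge0 c3_ge0 e_gt0 B_gt0 ec1 ec3 DeO AeO balance.
rewrite -/W => root_bound.
have -> : e / (b / a / B) - 1 = (a * (e * B) - b) / b by field; rewrite !gt_eqF.
rewrite normrM [`|b^-1|]gtr0_norm ?invr_gt0 // ltr_pdivrMr //.
apply: le_lt_trans root_bound _; rewrite ltr_pdivrMr //.
by move: WB; rewrite ltr_pdivrMr ?mulr_gt0 // => WB; lra.
Qed.

End ExpansionWindow.

End HelpHarmBoundary.

Section RichardsonRule.
Context {R : realType}.

Lemma sum_sq_div_sub1 (I : finType) (c lam pi : I -> R) :
  (forall j, pi j != 0) -> \sum_j c j = 1 -> \sum_j pi j = 1 ->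
  \sum_j c j ^+ 2 * lam j / pi j - 1 =
    \sum_j (c j ^+ 2 * (lam j - 1) / pi j + (c j - pi j) ^+ 2 / pi j).
Proof.
move=> pi_neq0 sum_c sum_pi.
rewrite [RHS](eq_bigr (fun j => c j ^+ 2 * lam j / pi j + (-2 * c j + pi j))); last first.
  by move=> j _; field.
by rewrite !big_split /= -mulr_sumr sum_c sum_pi; ring.
Qed.

Variables (k : nat) (c lam : 'I_k.+1 -> R).
Hypothesis rule : richardson_rule c lam.

Lemma richardson_lam_gt1 j : j != ord0 -> 1 < lam j.
Proof.
case: rule => lam0 lam_incr _ _ j_neq0; rewrite -lam0 lam_incr // lt0n.
by apply: contra j_neq0 => /eqP j0; apply/eqP/val_inj.
Qed.

Lemma richardson_nontrivial : (0 < k)%N -> exists2 j, j != ord0 & c j != 0.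
Proof.
case: rule => lam0 _ sum_c moment k_gt0.
have [/existsP[j /andP[j_neq0 cj_neq0]] | /existsPn c_off0] :=
  boolP [exists j, (j != ord0) && (c j != 0)]; first by exists j.
have c_eq0 j : j != ord0 -> c j = 0.
  by move=> j_neq0; apply/eqP; move: (c_off0 j); rewrite j_neq0 negbK.
have := moment 1%N; rewrite k_gt0 => /(_ isT).
rewrite (bigD1 ord0) //= big1 => [|j /c_eq0 ->]; last by rewrite mul0r.
move: sum_c; rewrite (bigD1 ord0) //= big1 => [|j /c_eq0 //].
by rewrite lam0 expr1n mulr1 !addr0 => -> /eqP; rewrite oner_eq0.
Qed.

Lemma richardson_amplification_gt1 (pi : 'I_k.+1 -> R) :
  (0 < k)%N -> allocation pi -> 1 < \sum_j c j ^+ 2 * lam j / pi j.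
Proof.
move=> k_gt0 [pi_gt0 sum_pi]; have [_ _ sum_c _] := rule.
rewrite -subr_gt0 sum_sq_div_sub1 // => [|j]; last by rewrite gt_eqF.
have term_ge0 j : 0 <= c j ^+ 2 * (lam j - 1) / pi j + (c j - pi j) ^+ 2 / pi j.
  have pij_ge0 := ltW (pi_gt0 j).
  rewrite addr_ge0 // divr_ge0 ?sqr_ge0 //.
  have [-> | /richardson_lam_gt1 lam_gt1] := eqVneq j ord0.
    by case: rule => -> _ _ _; rewrite subrr mulr0.
  by rewrite mulr_ge0 ?sqr_ge0 // subr_ge0 ltW.
have [j j_neq0 cj_neq0] := richardson_nontrivial k_gt0.
rewrite (bigD1 j) //=; apply: ltr_wpDr; first exact: sumr_ge0.
apply: ltr_pwDl; last by rewrite divr_ge0 ?sqr_ge0 // ltW.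
rewrite divr_gt0 // mulr_gt0 //; last by rewrite subr_gt0 richardson_lam_gt1.
by rewrite exprn_even_gt0 // cj_neq0 orbT.
Qed.

End RichardsonRule.

Section ZNEExpansion.
Context {R : realType}.
Context {k : nat} {c lam pi : 'I_k.+1 -> R} {mu : R -> R} {kappa : R}.

Lemma delta_mse_balance B e :
  delta_mse c lam pi mu B e = Dbias c lam mu e - Ak c lam pi mu e / B.
Proof.
rewrite /delta_mse /mse_noisy /mse_zne /Dbias /Ak.
under eq_bigr => j _ do rewrite invfM mulrA.
rewrite -mulr_suml; ring.
Qed.

Hypotheses (k_gt0 : (0 < k)%N) (rule : richardson_rule c lam).
Hypothesis mu_linear :
  forall j, bigO_at0 (fun e => mu (lam j * e) - 1 + kappa * lam j * e) 2.

Let rem j e := mu (lam j * e) - 1 + kappa * lam j * e.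

Lemma bias_zne_rem e : bias_zne c lam mu e = \sum_j c j * rem j e.
Proof.
have [_ _ sum_c moment] := rule.
rewrite /bias_zne /rem.
rewrite [RHS](eq_bigr (fun j => c j * mu (lam j * e) - c j + kappa * e * (c j * lam j ^+ 1))).
  by rewrite !big_split /= sumrN -mulr_sumr sum_c (moment 1%N k_gt0); ring.
by move=> j _; ring.
Qed.

Lemma bias_noisy_rem e : bias_noisy mu e = rem ord0 e - kappa * e.
Proof. by have [lam0 _ _ _] := rule; rewrite /bias_noisy /rem lam0 !mul1r; ring. Qed.

Lemma Dbias_expansion :
  bigO_at0 (fun e => Dbias c lam mu e - kappa ^+ 2 * e ^+ 2) 3.
Proof.
have remO j : bigO_at0 (rem j) 2 := mu_linear j.
have sumO : bigO_at0 (fun e => \sum_j c j * rem j e) 2 :=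
  bigO_at0_sum (fun j => bigO_at0Z (c j) (remO j)).
have := bigO_at0D (bigO_at0M (bigO_at0_monom (-2 * kappa) 1) (remO ord0))
  (bigO_at0B (bigO_at0W 3 (bigO_at0M (remO ord0) (remO ord0)) isT)
             (bigO_at0W 3 (bigO_at0M sumO sumO) isT)).
by apply: bigO_at0_eq => e _; rewrite /Dbias bias_noisy_rem bias_zne_rem; ring.
Qed.

Lemma Ak_expansion : bigO_at0 (fun e => Ak c lam pi mu e -
  2 * kappa * (\sum_j c j ^+ 2 * lam j / pi j - 1) * e) 2.
Proof.
have [lam0 _ _ _] := rule.
have vnO j := vn_linear (mu_linear j).
have := bigO_at0B (bigO_at0_sum (fun j => bigO_at0Z (c j ^+ 2 / pi j) (vnO j))) (vnO ord0).
apply: bigO_at0_eq => e _; rewrite /Ak lam0 !mul1r mulr1.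
rewrite (eq_bigr (fun j => c j ^+ 2 * vn mu (lam j * e) / pi j -
                           2 * kappa * e * (c j ^+ 2 * lam j / pi j))).
  by rewrite sumrB -mulr_sumr; ring.
by move=> j _; ring.
Qed.

End ZNEExpansion.

Theorem proposition10 (R : realType) (k : nat) (c lam pi : 'I_k.+1 -> R)
  (mu : R -> R) (gamma : R) (l : nat) :
  (1 <= k)%N -> richardson_rule c lam -> allocation pi ->
  0 < gamma -> (0 < l)%N ->
  (forall j : 'I_k.+1,
     bigO_at0 (fun e => mu (lam j * e) - (1 - gamma * lam j * e) ^+ l) 2) ->
  let kappa := gamma * l%:R in
  let S := \sum_(j < k.+1) c j ^+ 2 * lam j / pi j in
  let K1 := 2 * kappa * (S - 1) in
  [/\ bigO_at0 (fun e => Dbias c lam mu e - kappa ^+ 2 * e ^+ 2) 3,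
      bigO_at0 (fun e => vn mu e - 2 * kappa * e) 2,
      bigO_at0 (fun e => Ak c lam pi mu e - K1 * e) 2,
      (forall B e : R, 0 < B ->
         delta_mse c lam pi mu B e = Dbias c lam mu e - Ak c lam pi mu e / B) &
      forall estar : R -> R,
        (exists B0 : R, forall B, B0 < B ->
           lower_boundary (delta_mse c lam pi mu B) (estar B)) ->
        forall eta : R, 0 < eta -> exists M : R, forall B : R, M < B ->
          `| estar B / ((2 / kappa) * (S - 1) / B) - 1 | < eta].
Proof.
move=> k_gt0 rule alloc gamma_gt0 l_gt0 muO kappa S K1.
have kappa_gt0 : 0 < kappa by rewrite mulr_gt0 // ltr0n.
have K1_gt0 : 0 < K1.
  apply: mulr_gt0; first by rewrite mulr_gt0.
  by rewrite subr_gt0 richardson_amplification_gt1.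
have mu_linear j := power_law_linear (muO j).
have DbiasO := Dbias_expansion k_gt0 rule mu_linear.
have AkO : bigO_at0 (fun e => Ak c lam pi mu e - K1 * e) 2 :=
  Ak_expansion rule mu_linear.
split.
- exact: DbiasO.
- have [lam0 _ _ _] := rule.
  apply: bigO_at0_eq (vn_linear (mu_linear ord0)) => e _.
  by rewrite lam0 mul1r mulr1.
- exact: AkO.
- by move=> B e _; exact: delta_mse_balance.
move=> estar boundary.
have -> : 2 / kappa * (S - 1) = K1 / kappa ^+ 2 by rewrite /K1; field; exact: lt0r_neq0.
exact: (lower_boundary_asymptotics (exprn_gt0 2 kappa_gt0) K1_gt0 DbiasO AkO
  (Delta := delta_mse c lam pi mu) (fun B e _ => delta_mse_balance B e) boundary).
Qed.
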